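(* Fix $\delta>0$. Then $\lim_{l\to\infty}V_l^{\delta}=V^{\delta}$ on $\mathcal G_\delta\times[\underline{\lambda},\infty)$, and $\mathcal T(V^{\delta})(x_n^{\delta},\lambda)=V^{\delta}(x_n^{\delta},\lambda)$ for all $(x_n^\delta,\lambda)\in\mathcal G_\delta\times[\underline{\lambda},\infty)$.
   Context: Model: fix $p>0$, $q>0$, $d>0$, $\beta>0$, $\underline{\lambda}\ge0$ and distribution functions $F_U,F_Y$ of strictly positive random variables with finite expectation. For initial intensity $\lambda\ge\underline{\lambda}$, $\lambda_t=\underline{\lambda}+e^{-dt}(\lambda-\underline{\lambda})+\sum_{k=1}^{\widetilde N_t}Y_ke^{-d(t-T_k)}$ with $\widetilde N$ a rate-$\beta$ Poisson process (arrival times $T_k$) and $Y_k$ i.i.d. $\sim F_Y$ independent of $\widetilde N$; conditionally on $(\lambda_s)$, claims arrive as an inhomogeneous Poisson process $N_t$ with intensity $\lambda_t$, with i.i.d. sizes $U_j\sim F_U$ independent of everything else; surplus $X_t=x+pt-\sum_{j\le N_t}U_j$. The premium satisfies $p=(1+\eta)\mathbb E(U_1)\lambda_{\mathrm{av}}$, $\eta>0$, $\lambda_{\mathrm{av}}=\lim_t\mathbb E(\int_0^t\lambda_sds)/t$. Extended strategies: a pair $(L,\tau^F)$ with $L$ a dividend process (non-decreasing, càdlàg, adapted, $L_t\le X_t$ before ruin) and $\tau^F$ a stopping time at which all current surplus is paid and the business is closed; value $J((L,\tau^F);x,\lambda)=\mathbb E\big(\int_{0^-}^{\tau^L\wedge\tau^F}e^{-qt}dL_t+1_{\{\tau^F<\tau^L\}}e^{-q\tau^F}(X_{\tau^F}-L_{\tau^F})\big)$,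 $\tau^L=\inf\{t:X_t-L_{t^-}<0\}$. Discretization: for $\delta>0$, $\mathcal G_\delta=\{x_n^\delta=np\delta:n\ge0\}$, $\rho^\delta(x)=\max\{x_n^\delta\le x\}$. At state $(x_n^\delta,\lambda)$ let $\tau,U$ be the time until and size of the next claim, $T,Y$ the time until and size of the next intensity jump, $\lambda^c_t=\underline{\lambda}+e^{-dt}(\lambda-\underline{\lambda})$. Control actions: $\mathbf E_0$: pay nothing until $\delta\wedge\tau\wedge T$; if $\delta<\tau\wedge T$ new state $(x_{n+1}^\delta,\lambda^c_\delta)$; if $\tau\le\delta\wedge T$ and $y=x_n^\delta+p\tau-U<0$, ruin; if $y\ge0$ pay $y-\rho^\delta(y)$ and new state $(\rho^\delta(y),\lambda^c_\tau)$; if $T<\delta\wedge\tau$ pay $pT$ and new state $(x_n^\delta,\lambda^c_T+Y)$. $\mathbf E_1$ (only if $n\ge1$): pay $p\delta$, new state $(x_{n-1}^\delta,\lambda)$. $\mathbf E_F$: pay $x_n^\delta$ and close. $\widetilde\Pi^\delta_{x_n^\delta,\lambda}$: extended strategies obtained by finite or infinite sequences of these actions; $\widetilde\Pi^{\delta,l}_{x_n^\delta,\lambda}$: those obtained by a sequence of exactly $l$ control actions. $V^\delta(x_n^\delta,\lambda)=\sup_{\widetilde\Pi^\delta_{x_n^\delta,\lambda}}J$ and $V^\delta_l(x_n^\delta,\lambda)=\sup_{\widetilde\Pi^{\delta,l}_{x_n^\delta,\lambda}}J$. Operators on nonnegative Lebesgue measurable $w:\mathcal G_\delta\times[\underline{\lambda},\infty)\to[0,\infty)$: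 with $y=x_n^\delta+p\tau-U$, $\mathcal T_0(w)(x_n^\delta,\lambda)=\mathbb P(\delta\wedge T\wedge\tau=\delta)e^{-q\delta}w(x_{n+1}^\delta,\lambda^c_\delta)+\mathbb E\big(1_{\{\delta\wedge T\wedge\tau=\tau,\ y\ge0\}}e^{-q\tau}[w(\rho^\delta(y),\lambda^c_\tau)+y-\rho^\delta(y)]\big)+\mathbb E\big(1_{\{\delta\wedge T\wedge\tau=T\}}e^{-qT}[w(x_n^\delta,\lambda^c_T+Y)+pT]\big)$; $\mathcal T_1(w)(x_n^\delta,\lambda)=w(x_{n-1}^\delta,\lambda)+\delta p$ (for $n\ge1$); $\mathcal T_F(w)(x_n^\delta,\lambda)=x_n^\delta$; $\mathcal T=\max\{\mathcal T_0,\mathcal T_1,\mathcal T_F\}$ (with $\mathcal T_1$ omitted when $n=0$). *)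

From mathcomp Require Import all_boot all_order all_algebra.
From mathcomp Require Import all_classical all_reals all_analysis.

Set Implicit Arguments.
Unset Strict Implicit.
Unset Printing Implicit Defensive.

Import Order.TTheory GRing.Theory Num.Theory.
Local Open Scope classical_set_scope.
Local Open Scope ring_scope.

Record model (R : realType) := Model {
  prem : R;
  disc : R;
  decay : R;
  beta : R;                 (* rate of the intensity-jump Poisson process *)
  lamb : R;
  FU : probability R R;     (* law of the claim sizes U_j *)
  FY : probability R R      (* law of the intensity jumps Y_k *)
}.

Inductive action := E0 | E1 | EF.


Definition xg (R : realType) (M : model R) (delta : R) (n : nat) : R :=
  n%:R * prem M * delta.

(* index of rho^delta(y) for y >= 0: rho^delta(y) = xg (gidx y) *)
Definition gidx (R : realType) (M : model R) (delta : R) (y : R) : nat :=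
  Num.truncn (y / (prem M * delta)).

Definition lamc (R : realType) (M : model R) (lam t : R) : R :=
  lamb M + expR (- (decay M * t)) * (lam - lamb M).

(* integrated intensity  int_0^t lambda^c_s ds  (closed form) *)
Definition Lam (R : realType) (M : model R) (lam t : R) : R :=
  lamb M * t + (lam - lamb M) * (1 - expR (- (decay M * t))) / decay M.

Local Open Scope ereal_scope.

(* The continuation g n' lam' s
   is the (discounted-from-time-s) value in the new state (x_{n'}, lam'),
   s being the duration of the step.  The joint law of (tau, U, T, Y):
   T ~ Exp(beta), U ~ F_U, Y ~ F_Y independent, and on [0, T) the first claim
   time tau has survival function exp(-Lam lam t) (inhomogeneous Poisson
   process with intensity lambda^c_t).
   - {delta < tau /\ T}: probability exp(-Lam lam delta - beta delta);
   - {tau <= delta /\ T}: density beta-survival * lambda^c_s * exp(-Lam lam s);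
   - {T < delta /\ tau}: density beta e^{-beta s} * exp(-Lam lam s). *)
Definition T0gen (R : realType) (M : model R) (delta : R)
    (g : nat -> R -> R -> \bar R) (n : nat) (lam : R) : \bar R :=
  (expR (- (Lam M lam delta + beta M * delta)) * expR (- (disc M * delta)))%:E
      * g n.+1 (lamc M lam delta) delta
  + \int[lebesgue_measure]_(s in `]0%R, delta])
      ((expR (- (beta M * s)) * lamc M lam s * expR (- Lam M lam s)
          * expR (- (disc M * s)))%:E
       * \int[FU M]_u
           (let y := (xg M delta n + prem M * s - u)%R in
            if (0 <= y)%R then
              g (gidx M delta y) (lamc M lam s) s
              + (y - xg M delta (gidx M delta y))%:E
            else 0))
  + \int[lebesgue_measure]_(s in `]0%R, delta])
      ((beta M * expR (- (beta M * s)) * expR (- Lam M lam s)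
          * expR (- (disc M * s)))%:E
       * \int[FY M]_y (g n (lamc M lam s + y)%R s + (prem M * s)%:E)).

Definition Top0 (R : realType) (M : model R) (delta : R)
    (w : nat -> R -> \bar R) (n : nat) (lam : R) : \bar R :=
  T0gen M delta (fun n' lam' _ => w n' lam') n lam.

Definition Top1 (R : realType) (M : model R) (delta : R)
    (w : nat -> R -> \bar R) (n : nat) (lam : R) : \bar R :=
  w n.-1 lam + (delta * prem M)%:E.

Definition TopF (R : realType) (M : model R) (delta : R)
    (w : nat -> R -> \bar R) (n : nat) (lam : R) : \bar R :=
  (xg M delta n)%:E.

Definition Top (R : realType) (M : model R) (delta : R)
    (w : nat -> R -> \bar R) (n : nat) (lam : R) : \bar R :=
  match n with
  | 0%N => maxe (Top0 M delta w n lam) (TopF M delta w n lam)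
  | _.+1 => maxe (Top0 M delta w n lam)
                 (maxe (Top1 M delta w n lam) (TopF M delta w n lam))
  end.

(* Observations: (grid index n, intensity lambda, elapsed time).
   A history lists the observations so far, the current one first.
   A (history-dependent) choice of control actions is a policy. *)
Definition obs (R : realType) := (nat * R * R)%type.
Definition policy (R : realType) := seq (obs R) -> action.

Definition cur (R : realType) (M : model R) (h : seq (obs R)) : obs R :=
  head (0%N, lamb M, 0%R) h.

Definition admissible (R : realType) (M : model R) (pi : policy R) : Prop :=
  forall h, (cur M h).1.1 = 0%N -> pi h <> E1.

(* Expected discounted dividends of the first k control actions of pi,
   started from history h, plus a terminal reward term(n, lam) if the
   business is still open (not ruined, not closed) after k actions. *)
Fixpoint Jval (R : realType) (M : model R) (delta : R)
    (term : nat -> R -> \bar R) (k : nat) (pi : policy R) (h : seq (obs R))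
    : \bar R :=
  let: (n, lam, t) := cur M h in
  match k with
  | 0%N => term n lam
  | k'.+1 =>
    match pi h with
    | EF => (xg M delta n)%:E
    | E1 => Jval M delta term k' pi ((n.-1, lam, t) :: h) + (delta * prem M)%:E
    | E0 => T0gen M delta
              (fun n' lam' s => Jval M delta term k' pi ((n', lam', t + s)%R :: h))
              n lam
    end
  end.

(* V^delta_l : strategies made of exactly l control actions; if the business
   is still running after the l-th action, the remaining surplus is paid and
   the business closed (terminal reward x_n^delta). *)
Definition Vl (R : realType) (M : model R) (delta : R) (l : nat)
    (n : nat) (lam : R) : \bar R :=
  ereal_sup [set Jval M delta (fun n' _ => (xg M delta n')%:E) l pi
                   [:: (n, lam, 0%R)] | pi in admissible M].

(* V^delta : all (finite or infinite) sequences of control actions; the value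
   of a strategy is the limit (= supremum, payments being nonnegative) of the
   expected discounted dividends paid during its first k control actions. *)
Definition Vd (R : realType) (M : model R) (delta : R)
    (n : nat) (lam : R) : \bar R :=
  ereal_sup [set v | exists k pi, admissible M pi /\
                     v = Jval M delta (fun _ _ => 0) k pi [:: (n, lam, 0%R)]].

(* lambda_av = lim_t E(int_0^t lambda_s ds)/t = lamb + beta E(Y)/d *)
Definition lambda_av (R : realType) (M : model R) : \bar R :=
  (lamb M)%:E + (beta M / decay M)%:E * \int[FY M]_y y%:E.

(* V^delta is the supremum over k of the values V_k of k control actions
   with nothing paid at the horizon, and V_l^delta lies between V_l and
   V_(l+1); so both claims follow from the Bellman equation
   V_(k+1) = T(V_k) on [lamb, +oo).  Its "<=" half splits a strategy after
   its first action.  For ">=" the first action is followed by near-optimal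
   continuations, chosen against measurable approximations of V_k from below;
   the choice need not be measurable because the integrals in T_0 are
   monotone in arbitrary integrands, and monotone convergence then recovers
   T_0(V_k).  By monotonicity of T the V_k increase to V^delta, and monotone
   convergence inside T_0 turns T(V_k) = V_(k+1) into T(V^delta) = V^delta.
   Jumps Y > 0 a.s. keep the intensity in [lamb, +oo), where every weight of
   T_0 is nonnegative. *)

From mathcomp Require Import all_boot all_order all_algebra.
From mathcomp Require Import all_classical all_reals all_analysis.
From mathcomp Require Import measurable_realfun.
Set Implicit Arguments.
Unset Strict Implicit.
Unset Printing Implicit Defensive.
Import Order.TTheory GRing.Theory Num.Theory.
Local Open Scope classical_set_scope.
Local Open Scope ring_scope.

Section integral_any.
Local Open Scope ereal_scope.
Context d (T : measurableType d) (R : realType).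
Import HBNNSimple.

(* The integral is defined for every integrand, measurable or not, as a
   difference of suprema of integrals of simple functions lying below. *)
Let nnint (mu : set T -> \bar R) (f : T -> \bar R) :=
  ereal_sup [set sintegral mu h |
             h in [set h : {nnsfun T >-> R} | forall x, (h x)%:E <= f x]].

Let integral_nnint mu D f :
  \int[mu]_(x in D) f x = nnint mu ((f \_ D)^\+) - nnint mu ((f \_ D)^\-).
Proof. by []. Qed.

Let le_nnint mu f g : (forall x, f x <= g x) -> nnint mu f <= nnint mu g.
Proof.
move=> fg; apply: ereal_sup_le => _ [h hf <-]; exists h => //= x.
exact: le_trans (hf x) (fg x).
Qed.

Lemma le_integral_any (mu : set T -> \bar R) D f g :
  (forall x, D x -> f x <= g x) ->
  \int[mu]_(x in D) f x <= \int[mu]_(x in D) g x.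
Proof.
move=> fg; rewrite !integral_nnint; apply: leeB; apply: le_nnint => x;
  rewrite ?funeposE ?funenegE !patchE; case: ifPn => // /set_mem Dx.
- by apply: le_max2 => //; exact: fg.
- by apply: le_max2 => //; rewrite leeN2; exact: fg.
Qed.

Let le_nnint_off_null (mu : {measure set T -> \bar R}) N f g :
  measurable N -> mu N = 0 -> (forall x, 0 <= g x) ->
  (forall x, ~ N x -> f x = g x) -> nnint mu f <= nnint mu g.
Proof.
move=> mN N0 g0 fg; apply: ge_ereal_sup => _ [h hf <-].
have mCN : measurable (~` N) by exact: measurableC.
pose h' := mul_nnsfun h (indic_nnsfun R mCN).
have -> : sintegral mu h = sintegral mu h'.
  rewrite -!integralT_nnsfun; apply: ae_eq_integral => //.
  - by apply/measurable_EFinP; exact: measurable_funTS.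
  - by apply/measurable_EFinP; exact: measurable_funTS.
  - exists N; split => // x /= hx; apply: contra_notP hx => Nx _.
    by rewrite /h' /= mindicE mem_set //= mulr1.
apply: ereal_sup_ubound; exists h' => // x.
rewrite /h' /= mindicE; have [Nx|Nx] := pselect (N x).
  by rewrite memNset ?mulr0 //= => /(_ Nx).
by rewrite mem_set //= mulr1 -fg.
Qed.

Lemma eq_integral_off_null (mu : {measure set T -> \bar R}) N f g :
  measurable N -> mu N = 0 -> (forall x, ~ N x -> f x = g x) ->
  \int[mu]_x f x = \int[mu]_x g x.
Proof.
move=> mN N0 fg; rewrite !integral_nnint !patch_setT.
have fgC x : ~ N x -> g x = f x by move/fg.
by congr (_ - _); apply/eqP; rewrite eq_le;
  rewrite !(le_nnint_off_null mN N0) // => x; rewrite ?funeposE ?funenegE;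
  rewrite ?le_max ?lexx ?orbT // => Nx; rewrite ?fg ?fgC.
Qed.

Lemma le_integral_off_null (mu : {measure set T -> \bar R}) N f g :
  measurable N -> mu N = 0 -> (forall x, ~ N x -> f x <= g x) ->
  \int[mu]_x f x <= \int[mu]_x g x.
Proof.
move=> mN N0 fg; pose cut (h : T -> \bar R) x := if `[< N x >] then 0 else h x.
rewrite (eq_integral_off_null (g := cut f) mN N0); last first.
  by move=> x Nx; rewrite /cut asboolF.
rewrite [leRHS](eq_integral_off_null (g := cut g) mN N0); last first.
  by move=> x Nx; rewrite /cut asboolF.
by apply: le_integral_any => x _; rewrite /cut; case: asboolP => // /fg.
Qed.

End integral_any.

Section parametric_integral.
Local Open Scope ereal_scope.
Context dX dT (X : measurableType dX) (T : measurableType dT) (R : realType).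
Variable nu : {sigma_finite_measure set T -> \bar R}.

Lemma measurable_fun_integral_param (A : set X) (F : X * T -> \bar R) :
  measurable A -> measurable_fun setT F -> (forall x u, A x -> 0 <= F (x, u)) ->
  measurable_fun A (fun x => \int[nu]_u F (x, u)).
Proof.
move=> mA mF F0; have mAT : measurable (A `*` @setT T) by exact: measurableX.
pose G := F \_ (A `*` setT).
have mG : measurable_fun setT G.
  by apply/(measurable_restrictT _ mAT); exact: measurable_funTS.
have G0 z : 0 <= G z.
  by rewrite /G patchE; case: ifPn => // /set_mem [/= + _]; case: z => x u /= /F0.
apply: (eq_measurable_fun (fubini_F nu G)) => [x /set_mem Ax|].
  by apply: eq_integral => u _; rewrite /G patchE mem_set.
exact: measurable_funTS (measurable_fun_fubini_tonelli_F _ mG G0).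
Qed.

End parametric_integral.

Section nested_integral.
Local Open Scope ereal_scope.
Context dP dS dT (P : measurableType dP) (S : measurableType dS)
  (T : measurableType dT) (R : realType).
Variables (mu : {sigma_finite_measure set S -> \bar R}).
Variables (nu : {sigma_finite_measure set T -> \bar R}).
Variables (I : set S) (mI : measurable I).

Lemma measurable_fun_nested_integral (D : set P) (c : P * S -> R)
    (F : (P * S) * T -> \bar R) :
  measurable D -> measurable_fun setT c -> measurable_fun setT F ->
  (forall x s, D x -> I s -> (0 <= c (x, s))%R) ->
  (forall x s u, D x -> I s -> 0 <= F ((x, s), u)) ->
  measurable_fun D (fun x =>
    \int[mu]_(s in I) ((c (x, s))%:E * \int[nu]_u F ((x, s), u))).
Proof.
move=> mD mc mF c0 F0; have mDI : measurable (D `*` I) by exact: measurableX.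
have mInner : measurable_fun (D `*` I) (fun z => \int[nu]_u F (z, u)).
  by apply: measurable_fun_integral_param => // -[x s] u [/= Dx Is]; exact: F0.
pose H := (fun z => (c z)%:E * \int[nu]_u F (z, u)) \_ (D `*` I).
have mH : measurable_fun setT H.
  apply/(measurable_restrictT _ mDI); apply: emeasurable_funM mInner.
  by apply/measurable_EFinP; exact: measurable_funTS.
have H0 x s : D x -> 0 <= H (x, s).
  move=> Dx; rewrite /H patchE; case: ifPn => // /set_mem [_ /= Is].
  by rewrite mule_ge0 ?lee_fin ?c0 //; apply: integral_ge0 => u _; exact: F0.
apply: (eq_measurable_fun (fun x => \int[mu]_s H (x, s))); last first.
  exact: measurable_fun_integral_param mD mH H0.
move=> x /set_mem Dx; rewrite [RHS]integral_mkcond; apply: eq_integral => s _.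
rewrite /H !patchE; have -> // : ((x, s) \in D `*` I) = (s \in I).
by apply/idP/idP => /set_mem; [case=> _ /mem_set | move=> Is; apply/mem_set].
Qed.

Lemma nested_integral_cvg (x : P) (c : P * S -> R)
    (Fj : nat -> (P * S) * T -> \bar R) (F : (P * S) * T -> \bar R) :
  measurable_fun setT c -> (forall s, I s -> (0 <= c (x, s))%R) ->
  (forall j, measurable_fun setT (Fj j)) ->
  (forall j s u, I s -> 0 <= Fj j ((x, s), u)) ->
  (forall s u, I s -> nondecreasing_seq (fun j => Fj j ((x, s), u))) ->
  (forall s u, I s -> (fun j => Fj j ((x, s), u)) @ \oo --> F ((x, s), u)) ->
  (fun j => \int[mu]_(s in I) ((c (x, s))%:E * \int[nu]_u Fj j ((x, s), u)))
    @ \oo --> \int[mu]_(s in I) ((c (x, s))%:E * \int[nu]_u F ((x, s), u)).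
Proof.
move=> mc c0 mF F0 ndF cvgF.
have emb : measurable_fun setT (fun z : S * T => ((x, z.1), z.2)).
  exact: measurable_fun_pair
    (measurable_fun_pair (measurable_cst x) measurable_fst) measurable_snd.
have mFx j : measurable_fun setT (fun z : S * T => Fj j ((x, z.1), z.2)).
  exact: measurableT_comp (mF j) emb.
have inner_cvg s : I s -> (fun j => \int[nu]_u Fj j ((x, s), u)) @ \oo -->
    \int[nu]_u F ((x, s), u).
  move=> Is; have := @cvg_monotone_convergence _ _ _ nu setT measurableT
    (fun j u => Fj j ((x, s), u)).
  rewrite (eq_integral (fun u => F ((x, s), u))); last first.
    by move=> u _; apply: cvg_lim => //; exact: cvgF.
  apply=> [j|j u _|u _]; [|exact: F0|exact: ndF].
  exact: measurable_fun_pair2 (x, s) (mF j).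
have := @cvg_monotone_convergence _ _ _ mu I mI
  (fun j s => (c (x, s))%:E * \int[nu]_u Fj j ((x, s), u)).
rewrite (eq_integral (fun s => (c (x, s))%:E * \int[nu]_u F ((x, s), u)));
    last first.
  move=> s /set_mem Is; apply: cvg_lim => //.
  by apply: cvgeZl => //; exact: inner_cvg.
apply=> [j|j s Is|s Is a b ab].
- apply: emeasurable_funM.
    by apply/measurable_EFinP/measurable_funTS; exact: measurable_fun_pair2 x mc.
  by apply: (measurable_fun_integral_param nu mI (mFx j)) => s u Is; exact: F0.
- by rewrite mule_ge0 ?lee_fin ?c0 //; apply: integral_ge0 => u _; exact: F0.
- apply: lee_wpmul2l; first by rewrite lee_fin c0.
  by apply: le_integral_any => u _; exact: ndF.
Qed.

End nested_integral.

Section measurable_nat_index.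
Context d d' (T : measurableType d) (U : measurableType d') (R : realType).

Lemma measurable_fun_nat_index (N : T -> nat) (W : nat -> T -> U) :
  (forall m, measurable (N @^-1` [set m])) ->
  (forall m, measurable_fun setT (W m)) ->
  measurable_fun setT (fun z => W (N z) z).
Proof.
move=> mN mW _ B mB; rewrite setTI.
have -> : (fun z => W (N z) z) @^-1` B =
    \bigcup_m (N @^-1` [set m] `&` W m @^-1` B).
  by apply/seteqP; split => [z Bz|z [m _ [/= <- Bz]]] //; exists (N z).
apply: bigcupT_measurable => m; apply: measurableI => //.
by rewrite -[X in measurable X]setTI; exact: mW.
Qed.

Lemma measurable_truncn_preimage (Y : T -> R) (m : nat) :
  measurable_fun setT Y ->
  measurable ((fun z => Num.truncn (Y z)) @^-1` [set m]).
Proof.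
have mtruncn : measurable [set x : R | Num.truncn x = m].
  case: m => [|k].
    have -> : [set x : R | Num.truncn x = 0%N] = [set` `]-oo, 1%:R[].
      apply/seteqP; split => x /=; rewrite in_itv /= -truncn_le_nat leqn0.
        by move=> ->.
      by move/eqP.
    exact: measurable_itv.
  have -> : [set x : R | Num.truncn x = k.+1] = [set` `[k.+1%:R, k.+2%:R[].
    apply/seteqP; split => x /=; rewrite in_itv /= -truncn_le_nat -truncn_gt_nat.
      by move=> ->; rewrite leqnn.
    by case/andP => h1 h2; apply/eqP; rewrite eqn_leq h2.
  exact: measurable_itv.
by move=> mY; have := mY measurableT _ mtruncn; rewrite setTI.
Qed.

End measurable_nat_index.

Section lower_approx.
Local Open Scope ereal_scope.
Context (R : realType).

(* Approximation of [x] from below that is strict when [x > 0], so that a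
   supremum [x] is exceeded by an element of the set. *)
Definition lower_approx (j : nat) (x : \bar R) : \bar R :=
  maxe 0 (mine (x - (j.+1%:R^-1)%:E) j%:R%:E).

Lemma lower_approx_ge0 j x : 0 <= lower_approx j x.
Proof. by rewrite /lower_approx le_max lexx. Qed.

Lemma lower_approx_le j x : 0 <= x -> lower_approx j x <= x.
Proof.
move=> x0; rewrite /lower_approx ge_max x0 /= ge_min; apply/orP; left.
by apply: geeDl; rewrite lee_fin oppr_le0 invr_ge0.
Qed.

Lemma lower_approx_lt j x : 0 < x -> lower_approx j x < x.
Proof.
move=> x0; rewrite /lower_approx gt_max x0 /= gt_min; case: x x0 => [r|_|//] /=.
  by rewrite lte_fin => r0; rewrite -EFinD lte_fin ltrBlDr ltrDl invr_gt0 ltr0n.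
by rewrite ltry.
Qed.

Lemma lower_approx_nd x : nondecreasing_seq (lower_approx ^~ x).
Proof.
move=> a b ab; rewrite /lower_approx; apply: le_max2 => //; apply: le_min2.
  apply: leeD => //; rewrite leeN2 lee_fin lef_pV2 ?posrE ?ltr0n // ler_nat.
  by rewrite ltnS.
by rewrite lee_fin ler_nat.
Qed.

Lemma measurable_fun_lower_approx d (T : measurableType d) (D : set T)
    (f : T -> \bar R) j :
  measurable_fun D f -> measurable_fun D (fun x => lower_approx j (f x)).
Proof.
move=> mf; apply: measurable_maxe; first exact: measurable_cst.
apply: measurable_mine; last exact: measurable_cst.
by apply: emeasurable_funD => //; exact: measurable_cst.
Qed.

Lemma lower_approx_sup x : 0 <= x -> ereal_sup (range (lower_approx ^~ x)) = x.
Proof.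
move=> x0; apply/eqP; rewrite eq_le; apply/andP; split.
  by apply: ge_ereal_sup => _ [j _ <-]; exact: lower_approx_le.
rewrite leNgt; set S := ereal_sup _; apply/negP => Sx.
have S0 : 0 <= S.
  by apply: le_trans (lower_approx_ge0 0 x) _; apply: ereal_sup_ubound; exists 0%N.
suff [j Sj] : exists j, S < lower_approx j x.
  by move: Sj; apply/negP; rewrite -leNgt; apply: ereal_sup_ubound; exists j.
case: S S0 Sx => [t| |] //= t0 Sx; last by move: Sx; rewrite ltNge leey.
rewrite /lower_approx; case: x x0 Sx => [r _|_|//]; rewrite ?lte_fin => tr.
  exists (Num.truncn r + Num.truncn ((r - t)^-1)).+1.
  rewrite lt_max lt_min -EFinD !lte_fin; apply/orP; right; apply/andP; split.
    rewrite ltrBrDl -ltrBrDr -[ltRHS]invrK.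
    rewrite ltf_pV2 ?posrE ?invr_gt0 ?subr_gt0 ?ltr0n //.
    apply: lt_le_trans (truncnS_gt _) _; rewrite ler_nat !ltnS.
    exact: leq_trans (leq_addl _ _) (leqnSn _).
  apply: lt_trans tr _; apply: lt_le_trans (truncnS_gt _) _.
  by rewrite ler_nat ltnS leq_addr.
exists (Num.truncn t).+1.
by rewrite lt_max lt_min addye ?ltry //= !lte_fin truncnS_gt orbT.
Qed.

Lemma lower_approx_cvg x : 0 <= x -> lower_approx ^~ x @ \oo --> x.
Proof.
move=> x0; rewrite -[X in _ --> X](lower_approx_sup x0).
exact/ereal_nondecreasing_cvgn/lower_approx_nd.
Qed.

End lower_approx.

Section policies.
Context (R : realType) (M : model R) (delta : R).
Local Open Scope ereal_scope.

Lemma JvalS term k pi h : Jval M delta term k.+1 pi h =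
  let: (n, lam, t) := cur M h in
  match pi h with
  | EF => (xg M delta n)%:E
  | E1 => Jval M delta term k pi ((n.-1, lam, t) :: h) + (delta * prem M)%:E
  | E0 => T0gen M delta
            (fun n' lam' s => Jval M delta term k pi ((n', lam', t + s)%R :: h))
            n lam
  end.
Proof. by []. Qed.

Lemma Jval_bisim term (pi1 pi2 : policy R)
    (rel : seq (obs R) -> seq (obs R) -> Prop) :
  (forall h1 h2, rel h1 h2 ->
    [/\ (cur M h1).1 = (cur M h2).1, pi1 h1 = pi2 h2,
        forall n' lam' s, rel ((n', lam', (cur M h1).2 + s)%R :: h1)
                               ((n', lam', (cur M h2).2 + s)%R :: h2) &
        forall n', rel ((n', (cur M h1).1.2, (cur M h1).2) :: h1)
                       ((n', (cur M h2).1.2, (cur M h2).2) :: h2)]) ->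
  forall k h1 h2, rel h1 h2 ->
    Jval M delta term k pi1 h1 = Jval M delta term k pi2 h2.
Proof.
move=> hrel; elim=> [|k IH] h1 h2 r12 /=;
  have [e12 epi next1 next2] := hrel _ _ r12;
  move: e12 next1 next2; case: (cur M h1) => [[n1 l1] t1];
  case: (cur M h2) => [[n2 l2] t2] /= [<- <-] next1 next2 //.
rewrite epi; case: (pi2 h2) => [||//].
- by congr T0gen; do 3!apply: funext => ?; exact: IH.
- by rewrite (IH _ _ (next2 n1.-1)).
Qed.

Definition shift_obs (t : R) (o : obs R) : obs R := (o.1, o.2 + t)%R.

Lemma cur_map f h : h <> [::] -> cur M (map f h) = f (cur M h).
Proof. by case: h. Qed.

Lemma cur_cat h h' : h <> [::] -> cur M (h ++ h') = cur M h.
Proof. by case: h. Qed.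

(* [restart pi s x0] plays, from a fresh history, what [pi] plays after the
   history [x0] followed by a transition of duration [s]. *)
Definition restart (pi : policy R) (s : R) (x0 : obs R) : policy R :=
  fun h => if h is [::] then E0 else pi (map (shift_obs s) h ++ [:: x0]).

Lemma admissible_restart pi s x0 :
  admissible M pi -> admissible M (restart pi s x0).
Proof. by move=> adm [|o h] //= h0; apply: adm. Qed.

Lemma Jval_restart term k pi n' lam' s x0 :
  Jval M delta term k pi [:: (n', lam', s); x0] =
  Jval M delta term k (restart pi s x0) [:: (n', lam', 0%R)].
Proof.
apply: (@Jval_bisim _ _ _
  (fun h1 h2 => h2 <> [::] /\ h1 = map (shift_obs s) h2 ++ [:: x0])); last first.
  by split => //=; rewrite /shift_obs /= add0r.
move=> _ h2 [h2n ->]; rewrite cur_cat ?cur_map //; last by case: (h2) h2n.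
split => //; first by case: (h2) h2n.
by move=> n'' l'' s''; split => //=; rewrite /shift_obs /= addrAC.
Qed.

(* [glue_policy first P] plays [first] at the root and, once the first
   transition has led to the observation [a], plays [P a] as if started afresh
   at [a]. *)
Definition glue_policy (first : seq (obs R) -> action)
    (P : obs R -> policy R) : policy R :=
  fun h => if (size h <= 1)%N then first h else
    let a := nth (0%N, lamb M, 0%R) h (size h - 2) in
    P a (map (shift_obs (- a.2)) (take (size h - 1) h)).

Lemma admissible_glue first P :
  (forall h, (cur M h).1.1 = 0%N -> (size h <= 1)%N -> first h <> E1) ->
  (forall a, admissible M (P a)) -> admissible M (glue_policy first P).
Proof.
move=> hfirst hP h h0; rewrite /glue_policy.
case: ifPn => [|hs]; first exact: hfirst.
apply: hP; case: h h0 hs => [|o h] //= h0 hs.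
by rewrite subn1 /=; case: (size h) hs => // k _ /=; rewrite take_cons.
Qed.

Lemma Jval_glue term k first P a x0 :
  Jval M delta term k (glue_policy first P) [:: a; x0] =
  Jval M delta term k (P a) [:: (a.1, 0%R)].
Proof.
apply: (@Jval_bisim _ _ _ (fun h1 h2 => exists h, h1 = rcons h a ++ [:: x0] /\
    h2 = map (shift_obs (- a.2)) (rcons h a))); last first.
  by exists [::]; split => //=; rewrite /shift_obs subrr.
move=> _ _ [h [-> ->]]; have ha : rcons h a <> [::] by case: h.
rewrite cur_map // cur_cat //; split => //.
- rewrite /glue_policy size_cat size_rcons /= addn1 ltnS leqn0 /= subn2 subn1.
  rewrite nth_cat size_rcons ltnSn nth_rcons ltnn eqxx.
  by rewrite take_cat size_rcons ltnn subnn take0 cats0.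
- move=> n'' l'' s''; exists ((n'', l'', (cur M (rcons h a)).2 + s'')%R :: h).
  by split => //=; rewrite /shift_obs /= addrAC.
- move=> n''.
  by exists ((n'', (cur M (rcons h a)).1.2, (cur M (rcons h a)).2) :: h).
Qed.

Definition close_after (l : nat) (pi : policy R) : policy R :=
  fun h => if (l < size h)%N then EF else pi h.

Lemma admissible_close_after l pi :
  admissible M pi -> admissible M (close_after l pi).
Proof.
by move=> adm h h0; rewrite /close_after; case: ifP => // _; exact: adm.
Qed.

Lemma Jval_close_after l pi m h : (size h + m = l.+1)%N ->
  Jval M delta (fun _ _ => 0) m.+1 (close_after l pi) h =
  Jval M delta (fun n _ => (xg M delta n)%:E) m pi h.
Proof.
elim: m h => [|m IH] h hs.
  rewrite JvalS /=; case: (cur M h) => [[n lam] t].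
  by rewrite addn0 in hs; rewrite /close_after hs ltnSn.
rewrite !JvalS; case: (cur M h) => [[n lam] t].
rewrite /close_after ifF; last first.
  by apply/negbTE; rewrite -leqNgt -ltnS -hs addnS ltnS leq_addr.
case: (pi h) => [||//].
- by congr T0gen; do 3!apply: funext => ?; apply: IH; rewrite /= addSnnS.
- by rewrite IH //= addSnnS.
Qed.

End policies.

Local Ltac solve_measurable := repeat first
  [ exact: measurable_cst | exact: measurable_fst | exact: measurable_snd
  | exact: measurable_id
  | apply: measurable_funD | apply: measurable_funM | apply: measurable_funB
  | apply: measurable_funN
  | apply: measurableT_comp; [exact: measurable_expR|]
  | apply: measurableT_comp; [exact: measurable_snd|]
  | apply: measurableT_comp; [exact: measurable_fst|] ].

Section one_step.
Context (R : realType) (M : model R) (delta : R).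
Local Notation p := (prem M).
Local Open Scope ereal_scope.

(* [T0gen] conditions on which of delta, tau and T comes first: [weight_none]
   is the discounted probability that neither event occurs before delta,
   [weight_claim] and [weight_jump] are the discounted densities of tau and T
   on ]0, delta], and the payoffs are the rewards collected in each case. *)
Definition weight_none (lam : R) : R :=
  expR (- (Lam M lam delta + beta M * delta)) * expR (- (disc M * delta)).

Definition weight_claim (lam s : R) : R :=
  expR (- (beta M * s)) * lamc M lam s * expR (- Lam M lam s)
  * expR (- (disc M * s)).

Definition weight_jump (lam s : R) : R :=
  beta M * expR (- (beta M * s)) * expR (- Lam M lam s) * expR (- (disc M * s)).

Definition claim_payoff (g : nat -> R -> R -> \bar R) n lam s u : \bar R :=
  let y := (xg M delta n + p * s - u)%R in
  if (0 <= y)%R then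
    g (gidx M delta y) (lamc M lam s) s + (y - xg M delta (gidx M delta y))%:E
  else 0.

Definition jump_payoff (g : nat -> R -> R -> \bar R) n lam s y : \bar R :=
  g n (lamc M lam s + y)%R s + (p * s)%:E.

Lemma T0genE g n lam : T0gen M delta g n lam =
  (weight_none lam)%:E * g n.+1 (lamc M lam delta) delta
  + \int[lebesgue_measure]_(s in `]0%R, delta])
      ((weight_claim lam s)%:E * \int[FU M]_u claim_payoff g n lam s u)
  + \int[lebesgue_measure]_(s in `]0%R, delta])
      ((weight_jump lam s)%:E * \int[FY M]_y jump_payoff g n lam s y).
Proof. by []. Qed.

Lemma Top0_le_Top w n lam : Top0 M delta w n lam <= Top M delta w n lam.
Proof. by case: n => [|n] /=; rewrite le_max lexx. Qed.

Lemma TopF_le_Top w n lam : (xg M delta n)%:E <= Top M delta w n lam.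
Proof. by case: n => [|n] /=; rewrite !le_max lexx ?orbT. Qed.

Lemma Top1_le_Top w n lam : w n lam + (delta * p)%:E <= Top M delta w n.+1 lam.
Proof. by rewrite /= !le_max lexx ?orbT. Qed.

Lemma claim_payoff_cvg (gj : nat -> nat -> R -> R -> \bar R) g n lam s u :
  (forall m l t, (fun j => gj j m l t) @ \oo --> g m l t) ->
  (fun j => claim_payoff (gj j) n lam s u) @ \oo --> claim_payoff g n lam s u.
Proof.
move=> hg; rewrite /claim_payoff; case: ifP => _; last exact: cvg_cst.
by apply: cvgeD; [exact: fin_num_adde_defl | exact: hg | exact: cvg_cst].
Qed.

Lemma jump_payoff_cvg (gj : nat -> nat -> R -> R -> \bar R) g n lam s y :
  (forall m l t, (fun j => gj j m l t) @ \oo --> g m l t) ->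
  (fun j => jump_payoff (gj j) n lam s y) @ \oo --> jump_payoff g n lam s y.
Proof.
move=> hg.
by apply: cvgeD; [exact: fin_num_adde_defl | exact: hg | exact: cvg_cst].
Qed.

Lemma measurable_lamc : measurable_fun setT (fun z : R * R => lamc M z.1 z.2).
Proof. by rewrite /lamc; solve_measurable. Qed.

Lemma measurable_weight_none : measurable_fun setT weight_none.
Proof. by rewrite /weight_none /Lam; solve_measurable. Qed.

Lemma measurable_weight_claim :
  measurable_fun setT (fun z : R * R => weight_claim z.1 z.2).
Proof. by rewrite /weight_claim /lamc /Lam; solve_measurable. Qed.

Lemma measurable_weight_jump :
  measurable_fun setT (fun z : R * R => weight_jump z.1 z.2).
Proof. by rewrite /weight_jump /Lam; solve_measurable. Qed.

Lemma measurable_claim_payoff (w : nat -> R -> \bar R) n :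
  (forall m, measurable_fun setT (w m)) ->
  measurable_fun setT (fun z : (R * R) * R =>
    claim_payoff (fun m l _ => w m l) n z.1.1 z.1.2 z.2).
Proof.
move=> mw; pose y (z : (R * R) * R) := (xg M delta n + p * z.1.2 - z.2)%R.
have my : measurable_fun setT y by rewrite /y; solve_measurable.
apply: (measurable_fun_nat_index (N := fun z => gidx M delta (y z))
  (W := fun m z => if (0 <= y z)%R
                   then (w m (lamc M z.1.1 z.1.2) + (y z - xg M delta m)%:E)%E
                   else 0%E)) => [m|m].
  by apply: measurable_truncn_preimage; rewrite /y; solve_measurable.
apply: measurable_fun_if => //; first exact: measurable_fun_ler.
apply: measurable_funTS; apply: emeasurable_funD.
  exact: measurableT_comp (mw m) (measurableT_comp measurable_lamc measurable_fst).
by apply/measurable_EFinP; solve_measurable.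
Qed.

Lemma measurable_jump_payoff (w : nat -> R -> \bar R) n :
  (forall m, measurable_fun setT (w m)) ->
  measurable_fun setT (fun z : (R * R) * R =>
    jump_payoff (fun m l _ => w m l) n z.1.1 z.1.2 z.2).
Proof.
move=> mw; apply: emeasurable_funD; last first.
  by apply/measurable_EFinP; solve_measurable.
apply: measurableT_comp (mw n) _; apply: measurable_funD => //.
exact: measurableT_comp measurable_lamc measurable_fst.
Qed.

End one_step.

Definition intensity_range (R : realType) (M : model R) : set R :=
  [set lam | lamb M <= lam].

Lemma measurable_intensity_range (R : realType) (M : model R) :
  measurable (intensity_range M).
Proof.
rewrite (_ : intensity_range M = [set` `[lamb M, +oo[]).
  exact: measurable_itv.
by apply/seteqP; split => x /=; rewrite in_itv /= andbT.
Qed.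

Lemma lamc_ge (R : realType) (M : model R) lam s :
  lamb M <= lam -> lamb M <= lamc M lam s.
Proof. by move=> h; rewrite /lamc lerDl mulr_ge0 ?expR_ge0 ?subr_ge0. Qed.

Section dynamic_programming.
Context (R : realType) (M : model R) (delta : R).
Hypotheses (hp : 0 < prem M) (hdelta : 0 < delta).
Hypotheses (hlamb : 0 <= lamb M) (hbeta : 0 <= beta M).
Hypothesis hFY : FY M [set x : R | x <= 0] = 0%E.
Local Open Scope ereal_scope.
Local Notation D := (intensity_range M).

Lemma weight_none_ge0 lam : (0 <= weight_none M delta lam)%R.
Proof. by rewrite mulr_ge0 ?expR_ge0. Qed.

Lemma weight_claim_ge0 lam s : D lam -> (0 <= weight_claim M lam s)%R.
Proof.
move=> hl; rewrite !mulr_ge0 ?expR_ge0 //.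
exact: le_trans hlamb (lamc_ge _ hl).
Qed.

Lemma weight_jump_ge0 lam s : (0 <= weight_jump M lam s)%R.
Proof. by rewrite !mulr_ge0 ?expR_ge0. Qed.

Lemma xg_ge0 n : (0 <= xg M delta n)%R.
Proof. by rewrite !mulr_ge0 // ltW. Qed.

Lemma xg_gidx_le y : (0 <= y)%R -> (xg M delta (gidx M delta y) <= y)%R.
Proof.
move=> y0; rewrite /xg /gidx -mulrA -ler_pdivlMr ?mulr_gt0 //.
by rewrite truncn_le divr_ge0 // ?mulr_ge0 // ltW.
Qed.

Lemma claim_payoff_ge0 g n lam s u : (forall m l t, 0 <= g m l t) ->
  0 <= claim_payoff M delta g n lam s u.
Proof.
move=> g0; rewrite /claim_payoff; case: ifPn => // y0.
by rewrite adde_ge0 // lee_fin subr_ge0 xg_gidx_le.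
Qed.

Lemma jump_payoff_ge0 g n lam s y : (forall m l t, 0 <= g m l t) -> (0 <= s)%R ->
  0 <= jump_payoff M g n lam s y.
Proof. by move=> g0 s0; rewrite adde_ge0 // lee_fin mulr_ge0 // ltW. Qed.

Lemma claim_payoff_le g1 g2 n lam s u : D lam ->
  (forall m l t, D l -> g1 m l t <= g2 m l t) ->
  claim_payoff M delta g1 n lam s u <= claim_payoff M delta g2 n lam s u.
Proof.
move=> hl hg; rewrite /claim_payoff; case: ifP => // _.
by rewrite leeD2r // hg //; exact: lamc_ge.
Qed.

Lemma jump_payoff_le g1 g2 n lam s y : D lam -> (0 < y)%R ->
  (forall m l t, D l -> g1 m l t <= g2 m l t) ->
  jump_payoff M g1 n lam s y <= jump_payoff M g2 n lam s y.
Proof.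
move=> hl y0 hg; rewrite leeD2r // hg //.
by apply: le_trans (lamc_ge s hl) _; rewrite lerDl ltW.
Qed.

Lemma le_T0gen g1 g2 n lam : D lam ->
  (forall m l t, D l -> g1 m l t <= g2 m l t) ->
  T0gen M delta g1 n lam <= T0gen M delta g2 n lam.
Proof.
move=> hl hg; rewrite !T0genE; apply: leeD; first apply: leeD.
- by rewrite lee_wpmul2l ?lee_fin ?weight_none_ge0 // hg //; exact: lamc_ge.
- apply: le_integral_any => s _; rewrite lee_wpmul2l ?lee_fin ?weight_claim_ge0 //.
  by apply: le_integral_any => u _; exact: claim_payoff_le.
- apply: le_integral_any => s _; rewrite lee_wpmul2l ?lee_fin ?weight_jump_ge0 //.
  have mle0 : measurable [set x : R | (x <= 0)%R].
    rewrite (_ : [set x : R | (x <= 0)%R] = [set` `]-oo, 0%R]]).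
      exact: measurable_itv.
    by apply/seteqP; split => x /=; rewrite in_itv.
  apply: le_integral_off_null mle0 hFY _ => y /negP; rewrite -ltNge => y0.
  exact: jump_payoff_le.
Qed.

Lemma Top0_eq w1 w2 n lam : D lam -> (forall m l, D l -> w1 m l = w2 m l) ->
  Top0 M delta w1 n lam = Top0 M delta w2 n lam.
Proof.
move=> hl hw; apply/eqP; rewrite eq_le; apply/andP.
by split; apply: le_T0gen => // m l t /hw ->.
Qed.

Lemma Top_le w1 w2 n lam : D lam -> (forall m l, D l -> w1 m l <= w2 m l) ->
  Top M delta w1 n lam <= Top M delta w2 n lam.
Proof.
move=> hl hw; have h0 : Top0 M delta w1 n lam <= Top0 M delta w2 n lam.
  by apply: le_T0gen => // m l t; exact: hw.
case: n h0 => [|n] h0 /=; first exact: le_max2.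
by rewrite le_max2 // le_max2 // leeD2r // hw.
Qed.

Lemma Top_eq w1 w2 n lam : D lam -> (forall m l, D l -> w1 m l = w2 m l) ->
  Top M delta w1 n lam = Top M delta w2 n lam.
Proof.
move=> hl hw; apply/eqP; rewrite eq_le; apply/andP.
by split; apply: Top_le => // m l /hw ->.
Qed.

Lemma measurable_Top w n : (forall m, measurable_fun setT (w m)) ->
  (forall m l, 0 <= w m l) -> measurable_fun D (Top M delta w n).
Proof.
move=> mw w0; have mD := measurable_intensity_range M.
have mI : measurable [set` `]0%R, delta]] by exact: measurable_itv.
have mA : measurable_fun D (fun lam =>
    (weight_none M delta lam)%:E * w n.+1 (lamc M lam delta)).
  apply: measurable_funTS; apply: emeasurable_funM.
    by apply/measurable_EFinP; exact: measurable_weight_none.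
  by apply: measurableT_comp (mw _) _; rewrite /lamc; solve_measurable.
have mB := measurable_fun_nested_integral lebesgue_measure (FU M) mI mD
  (measurable_weight_claim M) (measurable_claim_payoff M delta n mw)
  (fun lam s hl _ => weight_claim_ge0 s hl)
  (fun lam s u _ _ => claim_payoff_ge0 n lam s u (fun m l _ => w0 m l)).
have s0 s : s \in `]0%R, delta] -> (0 <= s)%R by rewrite in_itv => /andP[/ltW].
have mC := measurable_fun_nested_integral lebesgue_measure (FY M) mI mD
  (measurable_weight_jump M) (measurable_jump_payoff M n mw)
  (fun lam s _ _ => weight_jump_ge0 lam s)
  (fun lam s y _ Is => jump_payoff_ge0 n lam y (fun m l _ => w0 m l) (s0 s Is)).
have mTop0 : measurable_fun D (Top0 M delta w n).
  exact: emeasurable_funD (emeasurable_funD mA mB) mC.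
case: n mA mB mC mTop0 => [|n] _ _ _ mTop0.
  exact: measurable_maxe mTop0 (measurable_cst _).
apply: measurable_maxe mTop0 (measurable_maxe _ (measurable_cst _)).
exact: measurable_funTS (emeasurable_funD (mw n) (measurable_cst _)).
Qed.

Lemma Top0_cvg (wj : nat -> nat -> R -> \bar R) (w : nat -> R -> \bar R) n lam :
  D lam -> (forall j m, measurable_fun setT (wj j m)) ->
  (forall j m l, 0 <= wj j m l) ->
  (forall m l, nondecreasing_seq (fun j => wj j m l)) ->
  (forall m l, (fun j => wj j m l) @ \oo --> w m l) ->
  (fun j => Top0 M delta (wj j) n lam) @ \oo --> Top0 M delta w n lam.
Proof.
move=> hl mwj wj0 ndwj cvgwj.
have w0 m l : 0 <= w m l.
  rewrite -(cvg_lim _ (cvgwj m l)) //; apply: lime_ge; last exact: nearW.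
  by apply/cvg_ex; exists (w m l).
have mI : measurable [set` `]0%R, delta]] by exact: measurable_itv.
have s0 s : s \in `]0%R, delta] -> (0 <= s)%R by rewrite in_itv => /andP[/ltW].
have cvgA := cvgeZl (y := (weight_none M delta lam)%:E) erefl
  (cvgwj n.+1 (lamc M lam delta)).
have cvgB := nested_integral_cvg (mu := lebesgue_measure) (nu := FU M) mI
  (x := lam)
  (Fj := fun j z => claim_payoff M delta (fun m l _ => wj j m l) n z.1.1 z.1.2 z.2)
  (F := fun z => claim_payoff M delta (fun m l _ => w m l) n z.1.1 z.1.2 z.2)
  (measurable_weight_claim M) (fun s _ => weight_claim_ge0 s hl)
  (fun j => measurable_claim_payoff M delta n (mwj j))
  (fun j s u _ => claim_payoff_ge0 n lam s u (fun m l _ => wj0 j m l))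
  (fun s u _ a b ab => claim_payoff_le n s u hl (fun m l _ _ => ndwj m l a b ab))
  (fun s u _ => claim_payoff_cvg (fun m l _ => cvgwj m l)).
have cvgC := nested_integral_cvg (mu := lebesgue_measure) (nu := FY M) mI
  (x := lam)
  (Fj := fun j z => jump_payoff M (fun m l _ => wj j m l) n z.1.1 z.1.2 z.2)
  (F := fun z => jump_payoff M (fun m l _ => w m l) n z.1.1 z.1.2 z.2)
  (measurable_weight_jump M) (fun s _ => weight_jump_ge0 lam s)
  (fun j => measurable_jump_payoff M n (mwj j))
  (fun j s y Is => jump_payoff_ge0 n lam y (fun m l _ => wj0 j m l) (s0 s Is))
  (fun s y _ a b ab => leeD2r _ (ndwj _ _ a b ab))
  (fun s y _ => jump_payoff_cvg (fun m l _ => cvgwj m l)).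
apply: cvgeD (cvgeD _ cvgA cvgB) cvgC; apply: ge0_adde_def; rewrite !inE.
- rewrite adde_ge0 ?mule_ge0 ?lee_fin ?weight_none_ge0 //.
  apply: integral_ge0 => s _; rewrite mule_ge0 ?lee_fin ?weight_claim_ge0 //.
  by apply: integral_ge0 => u _; apply: claim_payoff_ge0 => m l _.
- apply: integral_ge0 => s Is; rewrite mule_ge0 ?lee_fin ?weight_jump_ge0 //.
  by apply: integral_ge0 => y _; apply: jump_payoff_ge0 => [m l _|]; last exact: s0.
- by rewrite mule_ge0 ?lee_fin ?weight_none_ge0.
- apply: integral_ge0 => s _; rewrite mule_ge0 ?lee_fin ?weight_claim_ge0 //.
  by apply: integral_ge0 => u _; apply: claim_payoff_ge0 => m l _.
Qed.

Local Notation J k pi h := (Jval M delta (fun _ _ => 0) k pi h).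

(* [Vk k] is [Vl k] without the final payment of the surplus, so that [Vd] is
   the supremum of the [Vk k]. *)
Definition Vk k n lam :=
  ereal_sup [set J k pi [:: (n, lam, 0%R)] | pi in admissible M].

Let admissible_close : admissible M (fun _ => EF).
Proof. by []. Qed.
(* [admissible] unfolds to a product, whose binder would become implicit. *)
Arguments admissible_close : clear implicits.

(* Values below [lamb M] never matter; zeroing them makes the value functions
   measurable on the whole line, as required by Fubini-Tonelli. *)
Definition restrict_range (w : nat -> R -> \bar R) m := w m \_ D.

Lemma restrict_rangeE w m l : D l -> restrict_range w m l = w m l.
Proof. by move=> hl; rewrite /restrict_range patchE mem_set. Qed.

Lemma restrict_range_ge0 w m l : (forall m l, 0 <= w m l) ->
  0 <= restrict_range w m l.
Proof. by move=> w0; rewrite /restrict_range patchE; case: ifP. Qed.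

Lemma le_Vk k pi n lam :
  admissible M pi -> J k pi [:: (n, lam, 0%R)] <= Vk k n lam.
Proof. by move=> adm; apply: ereal_sup_ubound; exists pi. Qed.

Lemma Jval_close_ge0 k n lam : 0 <= J k (fun _ => EF) [:: (n, lam, 0%R)].
Proof. by case: k => [|k] //=; rewrite lee_fin xg_ge0. Qed.

Lemma Vk_ge0 k n lam : 0 <= Vk k n lam.
Proof.
exact: le_trans (Jval_close_ge0 k n lam) (le_Vk k n lam admissible_close).
Qed.

Lemma Vk0 n lam : Vk 0 n lam = 0.
Proof.
apply/eqP; rewrite eq_le; apply/andP; split; last exact: Vk_ge0.
by apply: ge_ereal_sup => _ [pi _ <-].
Qed.

Lemma xg_le_Vk k n lam : (xg M delta n)%:E <= Vk k.+1 n lam.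
Proof. exact (le_Vk k.+1 n lam admissible_close). Qed.

Lemma Vk_pay_le k n lam : Vk k n lam + (delta * prem M)%:E <= Vk k.+1 n.+1 lam.
Proof.
rewrite -leeBrDr //; apply: ge_ereal_sup => _ [pi adm <-]; rewrite leeBrDr //.
pose first h := if ((cur M h).1.1 == 0)%N then E0 else E1.
have adm' : admissible M (glue_policy M first (fun _ => pi)).
  by apply: admissible_glue => // h h0 _; rewrite /first h0.
by apply: le_trans (le_Vk _ n.+1 lam adm'); rewrite JvalS /= Jval_glue.
Qed.

Lemma Vk_le_Top k n lam : D lam -> Vk k.+1 n lam <= Top M delta (Vk k) n lam.
Proof.
move=> hl; apply: ge_ereal_sup => _ [pi adm <-]; rewrite JvalS /=.
case Hpi: (pi [:: (n, lam, 0%R)]).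
- apply: le_trans (Top0_le_Top _ _ _ _ _); apply: le_T0gen => // n' lam' s _.
  by rewrite Jval_restart; exact/le_Vk/admissible_restart.
- case: n Hpi => [|n] Hpi.
    by have := adm [:: (0%N, lam, 0%R)] erefl; rewrite Hpi.
  apply: le_trans (Top1_le_Top _ _ _ _ _); rewrite leeD2r //.
  by rewrite Jval_restart; exact/le_Vk/admissible_restart.
- exact: TopF_le_Top.
Qed.

Lemma Vk_near_optimal k j n lam : exists pi, admissible M pi /\
  lower_approx j (restrict_range (Vk k) n lam) <= J k pi [:: (n, lam, 0%R)].
Proof.
have [v_gt0|] := ltP 0 (restrict_range (Vk k) n lam).
  have hl : D lam.
    move: v_gt0; rewrite /restrict_range patchE.
    by case: ifPn => [/set_mem|]; rewrite ?ltxx.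
  have := lower_approx_lt j v_gt0; rewrite restrict_rangeE //.
  by case/ereal_sup_gt => _ [pi adm <-] /ltW; exists pi.
move=> v_le0; exists (fun _ => EF); split; first exact: admissible_close.
have -> : restrict_range (Vk k) n lam = 0.
  by apply/eqP; rewrite eq_le v_le0 restrict_range_ge0 // => *; exact: Vk_ge0.
exact: le_trans (lower_approx_le j (lexx 0)) (Jval_close_ge0 k n lam).
Qed.

Lemma Top0_approx_le_Vk k j n lam : D lam ->
  Top0 M delta (fun m l => lower_approx j (restrict_range (Vk k) m l)) n lam <=
  Vk k.+1 n lam.
Proof.
move=> hl.
have [P HP] := choice (fun a : obs R => Vk_near_optimal k j a.1.1 a.1.2).
have adm : admissible M (glue_policy M (fun _ => E0) P).
  by apply: admissible_glue => // a; have [] := HP a.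
apply: le_trans (le_Vk _ _ _ adm); rewrite JvalS /=.
apply: le_T0gen => // n' lam' s _; rewrite Jval_glue.
by have [] := HP (n', lam', (0 + s)%R).
Qed.

Lemma Top0_le_Vk k n lam : D lam -> (forall m, measurable_fun D (Vk k m)) ->
  Top0 M delta (Vk k) n lam <= Vk k.+1 n lam.
Proof.
move=> hl mVk; have mD := measurable_intensity_range M.
have wr0 m l : 0 <= restrict_range (Vk k) m l.
  by apply: restrict_range_ge0 => *; exact: Vk_ge0.
have cvg_approx := Top0_cvg (n := n) hl
  (fun j m => measurable_fun_lower_approx j
                ((measurable_restrictT _ mD).1 (mVk m)))
  (fun j m l => lower_approx_ge0 j _) (fun m l => lower_approx_nd _)
  (fun m l => lower_approx_cvg (wr0 m l)).
rewrite -(Top0_eq (w1 := restrict_range (Vk k))) //; last first.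
  by move=> m l; exact: restrict_rangeE.
rewrite -(cvg_lim _ cvg_approx) //; apply: lime_le.
  by apply/cvg_ex; eexists; exact: cvg_approx.
by apply: nearW => j; exact: Top0_approx_le_Vk.
Qed.

Lemma Top_le_Vk k n lam : D lam -> (forall m, measurable_fun D (Vk k m)) ->
  Top M delta (Vk k) n lam <= Vk k.+1 n lam.
Proof.
move=> hl mVk; case: n => [|n] /=.
  by rewrite !ge_max Top0_le_Vk // xg_le_Vk.
rewrite !ge_max Top0_le_Vk // xg_le_Vk andbT.
exact (Vk_pay_le k n lam).
Qed.

Lemma measurable_Vk k m : measurable_fun D (Vk k m).
Proof.
have mD := measurable_intensity_range M.
elim: k m => [|k IH] m.
  apply: (eq_measurable_fun (fun _ => 0)); last exact: measurable_cst.
  by move=> l _; rewrite Vk0.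
apply: (eq_measurable_fun (Top M delta (restrict_range (Vk k)) m)).
  move=> l /set_mem hl.
  have -> : Top M delta (restrict_range (Vk k)) m l = Top M delta (Vk k) m l.
    by apply: Top_eq => // m' l'; exact: restrict_rangeE.
  apply/eqP; rewrite eq_le; apply/andP.
  by split; [exact: Top_le_Vk | exact: Vk_le_Top].
apply: measurable_Top => // [m'|m' l].
  exact: (measurable_restrictT _ mD).1 (IH m').
by apply: restrict_range_ge0 => *; exact: Vk_ge0.
Qed.

Lemma Vk_Bellman k n lam : D lam -> Vk k.+1 n lam = Top M delta (Vk k) n lam.
Proof.
move=> hl; apply/eqP; rewrite eq_le; apply/andP; split; first exact: Vk_le_Top.
by apply: Top_le_Vk => // m; exact: measurable_Vk.
Qed.

Lemma Vk_nd n lam : D lam -> nondecreasing_seq (fun k => Vk k n lam).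
Proof.
move=> hl; apply/nondecreasing_seqP => k; elim: k n lam hl => [|k IH] n lam hl.
  by rewrite Vk0 Vk_ge0.
rewrite !(Vk_Bellman _ _ hl).
by apply: (Top_le _ hl) => m l; exact: IH.
Qed.

Lemma Vd_sup n lam : Vd M delta n lam = ereal_sup (range (fun k => Vk k n lam)).
Proof.
apply/eqP; rewrite eq_le; apply/andP; split.
  apply: ge_ereal_sup => _ [k [pi [adm ->]]].
  by apply: le_trans (le_Vk k n lam adm) _; apply: ereal_sup_ubound; exists k.
apply: ge_ereal_sup => _ [k _ <-]; apply: ge_ereal_sup => _ [pi adm <-].
by apply: ereal_sup_ubound; exists k, pi.
Qed.

Lemma Vk_le_Vd k n lam : Vk k n lam <= Vd M delta n lam.
Proof. by rewrite Vd_sup; apply: ereal_sup_ubound; exists k. Qed.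

Lemma Vk_cvg n lam : D lam -> (fun k => Vk k n lam) @ \oo --> Vd M delta n lam.
Proof. by move=> hl; rewrite Vd_sup; apply/ereal_nondecreasing_cvgn/Vk_nd. Qed.

Lemma Top0_Vd_le n lam :
  D lam -> Top0 M delta (Vd M delta) n lam <= Vd M delta n lam.
Proof.
move=> hl; have mD := measurable_intensity_range M.
pose wr k := restrict_range (Vk k); pose wd := restrict_range (Vd M delta).
have nd_wr m l : nondecreasing_seq (fun j => wr j m l).
  move=> a b ab; rewrite /wr /restrict_range !patchE.
  by case: ifPn => // /set_mem hl'; exact: Vk_nd.
have cvg_wr m l : (fun j => wr j m l) @ \oo --> wd m l.
  rewrite /wd /restrict_range patchE (_ : (fun j => wr j m l) =
    fun j => if l \in D then Vk j m l else point); last first.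
    by apply/funext => j; rewrite /wr /restrict_range patchE.
  by case: ifPn => [/set_mem hl'|_]; [exact: Vk_cvg | exact: cvg_cst].
have cvg_Top0 := Top0_cvg (n := n) hl
  (fun j m => (measurable_restrictT _ mD).1 (measurable_Vk j m))
  (fun j m l => restrict_range_ge0 _ _ (fun m l => Vk_ge0 j m l)) nd_wr cvg_wr.
have -> : Top0 M delta (Vd M delta) n lam = Top0 M delta wd n lam.
  by apply: Top0_eq => // m l hl'; rewrite /wd restrict_rangeE.
rewrite -(cvg_lim _ cvg_Top0) //; apply: lime_le.
  by apply/cvg_ex; eexists; exact: cvg_Top0.
apply: nearW => j.
have -> : Top0 M delta (wr j) n lam = Top0 M delta (Vk j) n lam.
  by apply: Top0_eq => // m l hl'; rewrite /wr restrict_rangeE.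
apply: le_trans (Top0_le_Top _ _ _ _ _) _; rewrite -(Vk_Bellman _ _ hl).
exact: Vk_le_Vd.
Qed.

Lemma Vd_pay_le n lam :
  Vd M delta n lam + (delta * prem M)%:E <= Vd M delta n.+1 lam.
Proof.
rewrite [in leLHS]Vd_sup -leeBrDr //; apply: ge_ereal_sup => _ [k _ <-].
by rewrite leeBrDr //; exact: le_trans (Vk_pay_le k n lam) (Vk_le_Vd _ _ _).
Qed.

Lemma Vd_fixpoint n lam :
  D lam -> Top M delta (Vd M delta) n lam = Vd M delta n lam.
Proof.
move=> hl; apply/eqP; rewrite eq_le; apply/andP; split.
  have xg_le : (xg M delta n)%:E <= Vd M delta n lam.
    exact: le_trans (xg_le_Vk 0 n lam) (Vk_le_Vd _ _ _).
  case: n xg_le => [|n] xg_le /=; rewrite !ge_max Top0_Vd_le // xg_le ?andbT //.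
  exact (Vd_pay_le n lam).
rewrite [leLHS]Vd_sup; apply: ge_ereal_sup => _ [[|k] _ <-].
  by rewrite Vk0; apply: le_trans (TopF_le_Top _ _ _ _ _); rewrite lee_fin xg_ge0.
rewrite (Vk_Bellman _ _ hl).
by apply: (Top_le _ hl) => m l _; exact: Vk_le_Vd.
Qed.

Lemma le_Jval_term term1 term2 k pi h :
  (forall m l, term1 m l <= term2 m l) -> D (cur M h).1.2 ->
  Jval M delta term1 k pi h <= Jval M delta term2 k pi h.
Proof.
move=> le12; elim: k h => [|k IH] h.
  by rewrite /=; case: (cur M h) => [[n lam] t].
rewrite !JvalS; case: (cur M h) => [[n lam] t] /= hl; case: (pi h) => [||//].
- by apply: le_T0gen => // n' lam' s hl'; exact: IH.
- by rewrite leeD2r //; exact: IH.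
Qed.

Lemma Vk_le_Vl l n lam : D lam -> Vk l n lam <= Vl M delta l n lam.
Proof.
move=> hl; apply: ge_ereal_sup => _ [pi adm <-].
have le_term m (l' : R) : 0 <= (xg M delta m)%:E by rewrite lee_fin xg_ge0.
apply: le_trans (le_Jval_term l pi (h := [:: (n, lam, 0%R)]) le_term hl) _.
by apply: ereal_sup_ubound; exists pi.
Qed.

Lemma Vl_le_Vk l n lam : Vl M delta l n lam <= Vk l.+1 n lam.
Proof.
apply: ge_ereal_sup => _ [pi adm <-].
rewrite -(Jval_close_after _ _ _ (l := l)) ?add1n //.
exact/le_Vk/admissible_close_after.
Qed.

Lemma Vl_cvg n lam :
  D lam -> (fun l => Vl M delta l n lam) @ \oo --> Vd M delta n lam.
Proof.
move=> hl; apply: (squeeze_cvge (f := fun l => Vk l n lam)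
                                (h := fun l => Vk l.+1 n lam)).
- by apply: nearW => l; rewrite Vk_le_Vl //= Vl_le_Vk.
- exact: Vk_cvg.
- by rewrite (cvg_shiftS (fun l => Vk l n lam)); exact: Vk_cvg.
Qed.

End dynamic_programming.

Theorem proposition6p4 (R : realType) (M : model R) (eta delta : R) :
  0 < prem M -> 0 < disc M -> 0 < decay M -> 0 < beta M -> 0 <= lamb M ->
  FU M [set x : R | x <= 0] = 0%E -> FY M [set x : R | x <= 0] = 0%E ->
  (\int[FU M]_u u%:E < +oo)%E -> (\int[FY M]_y y%:E < +oo)%E ->
  0 < eta ->
  (prem M)%:E = ((1 + eta)%:E * \int[FU M]_u u%:E * lambda_av M)%E ->
  0 < delta ->
  (forall (n : nat) (lam : R), lamb M <= lam ->
     (fun l : nat => Vl M delta l n lam) @ \oo --> Vd M delta n lam) /\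
  (forall (n : nat) (lam : R), lamb M <= lam ->
     Top M delta (Vd M delta) n lam = Vd M delta n lam).
Proof.
move=> hp _ _ /ltW hbeta hlamb _ hFY _ _ _ _ hdelta.
split=> n lam hl; first exact: Vl_cvg hp hdelta hlamb hbeta hFY n lam hl.
exact: Vd_fixpoint hp hdelta hlamb hbeta hFY n lam hl.
Qed.
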